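(* Let $p\in\mathcal C^2(\mathbb R)$ with $0<a\le p(t)\le b$ for all $t$ and $\dot p,\ddot p$ bounded. Suppose there are $\tilde t_1<\tilde t_2$ such that $\dot p$ attains its maximum $\sup_{t\in\mathbb R}\dot p(t)$ at both $\tilde t_1$ and $\tilde t_2$, and $p(\tilde t_1)>p(\tilde t_2)$. Then the ping-pong map $(t_0,v_0)\mapsto(t_1,v_1)$ on $\mathbb R\times(v_*,\infty)$ is not injective: there exist two distinct points with the same image.
   Context: Ping-pong map for the forcing $p$: let $v_*=2\max\{\sup_t\dot p(t),0\}$. For $(t_0,v_0)\in\mathbb R\times(v_*,\infty)$, let $\tilde t$ be the unique solution of $(\tilde t-t_0)v_0=p(\tilde t)$, and set $v_1=v_0-2\dot p(\tilde t)$, $t_1=\tilde t+p(\tilde t)/v_1$. *)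

From Stdlib Require Import Reals Lra.
Open Scope R_scope.

(* v_* = 2 max{ sup_t dp(t), 0 }, with dp the derivative of p;
   [above_vstar dp v0] means v0 > v_*. *)
Definition above_vstar (dp : R -> R) (v0 : R) : Prop :=
  exists s, is_lub (fun y => exists t, y = dp t) s /\ 2 * Rmax s 0 < v0.

Definition pingpong (p dp : R -> R) (t0 v0 t1 v1 : R) : Prop :=
  exists tt,
    (tt - t0) * v0 = p tt /\
    (forall s, (s - t0) * v0 = p s -> s = tt) /\
    v1 = v0 - 2 * dp tt /\
    t1 = tt + p tt / v1.

From Stdlib Require Import Reals Lra.
Open Scope R_scope.

(* The idea
   is to launch two balls with the same speed v0 = v1 + 2m that hit the wall at
   the two times tt1 and tt2, where v1 = (p tt1 - p tt2) / (tt2 - tt1) > 0 is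
   the slope of the chord joining the two impacts.  Both balls leave the wall
   with speed v0 - 2 dp(tt_i) = v1, and by the choice of v1 they come back at
   the same time tt1 + p tt1 / v1 = tt2 + p tt2 / v1, while their launch times
   differ. *)

(* A function bounded between a and b whose derivative is bounded above by m
   must have m >= 0: otherwise it would decrease by more than b - a. *)
Lemma derivative_bound_nonneg (p dp : R -> R) (a b m : R)
  (Hdp : forall t, derivable_pt_lim p t (dp t))
  (Hbounds : forall t, a <= p t <= b)
  (Hm : forall t, dp t <= m) :
  0 <= m.
Proof.
  destruct (Rle_or_lt 0 m) as [Hpos | Hneg]; [exact Hpos |].
  set (T := (b - a) / (- m) + 1).
  assert (Hgap : 0 <= (b - a) / (- m)).
  { pose proof (Hbounds 0).
    unfold Rdiv; apply Rmult_le_pos; [lra | left; apply Rinv_0_lt_compat; lra]. }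
  assert (HT : 0 < T) by (unfold T; lra).
  destruct (MVT_cor2 p dp 0 T HT (fun c _ => Hdp c)) as [c [Hc _]].
  assert (HmT : m * T = - (b - a) + m) by (unfold T; field; lra).
  pose proof (Hm c); pose proof (Hbounds 0); pose proof (Hbounds T).
  nra.
Qed.

(* If the speed exceeds every value of dp, the function s |-> (s - t0) v0 - p s
   is strictly increasing, so the impact equation has at most one solution. *)
Lemma impact_unique (p dp : R -> R) (m t0 v0 tt : R)
  (Hdp : forall t, derivable_pt_lim p t (dp t))
  (Hm : forall t, dp t <= m) (Hv : m < v0)
  (Himpact : (tt - t0) * v0 = p tt) :
  forall s, (s - t0) * v0 = p s -> s = tt.
Proof.
  intros s Hs.
  destruct (Rtotal_order s tt) as [Hlt | [Heq | Hgt]]; [| exact Heq |].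
  - destruct (MVT_cor2 p dp s tt Hlt (fun c _ => Hdp c)) as [c [Hc _]].
    assert (Hzero : (tt - s) * (v0 - dp c) = 0) by nra.
    pose proof (Hm c); nra.
  - destruct (MVT_cor2 p dp tt s Hgt (fun c _ => Hdp c)) as [c [Hc _]].
    assert (Hzero : (s - tt) * (v0 - dp c) = 0) by nra.
    pose proof (Hm c); nra.
Qed.

Lemma pingpong_from_impact (p dp : R -> R) (m tt v0 : R)
  (Hdp : forall t, derivable_pt_lim p t (dp t))
  (Hm : forall t, dp t <= m) (Hv : m < v0) (Hv0 : 0 < v0) :
  pingpong p dp (tt - p tt / v0) v0
    (tt + p tt / (v0 - 2 * dp tt)) (v0 - 2 * dp tt).
Proof.
  assert (Himpact : (tt - (tt - p tt / v0)) * v0 = p tt) by (field; lra).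
  exists tt; repeat split.
  - exact Himpact.
  - exact (impact_unique p dp m _ _ _ Hdp Hm Hv Himpact).
Qed.

Lemma above_vstar_of_max (dp : R -> R) (m v0 : R)
  (Hmax : is_lub (fun y => exists t, y = dp t) m)
  (Hv : 2 * Rmax m 0 < v0) :
  above_vstar dp v0.
Proof. exists m; split; assumption. Qed.

Lemma chord_return_times (p : R -> R) (tt1 tt2 v1 : R)
  (Hv1 : v1 <> 0) (Hchord : v1 * (tt2 - tt1) = p tt1 - p tt2) :
  tt1 + p tt1 / v1 = tt2 + p tt2 / v1.
Proof.
  apply Rmult_eq_reg_r with (r := v1); [| exact Hv1].
  replace ((tt1 + p tt1 / v1) * v1) with (tt1 * v1 + p tt1) by (field; exact Hv1).
  replace ((tt2 + p tt2 / v1) * v1) with (tt2 * v1 + p tt2) by (field; exact Hv1).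
  lra.
Qed.

Lemma distinct_launch_times (p : R -> R) (tt1 tt2 v0 : R)
  (Hlt : tt1 < tt2) (Hp : p tt2 <= p tt1) (Hv0 : 0 < v0) :
  tt1 - p tt1 / v0 < tt2 - p tt2 / v0.
Proof.
  apply Rmult_lt_reg_r with (r := v0); [exact Hv0 |].
  replace ((tt1 - p tt1 / v0) * v0) with (tt1 * v0 - p tt1) by (field; lra).
  replace ((tt2 - p tt2 / v0) * v0) with (tt2 * v0 - p tt2) by (field; lra).
  nra.
Qed.

Theorem mainTheorem8 (p dp ddp : R -> R) (a b tt1 tt2 : R)
  (Hdp : forall t, derivable_pt_lim p t (dp t))
  (Hddp : forall t, derivable_pt_lim dp t (ddp t))
  (Hcont : continuity ddp)
  (Ha : 0 < a)
  (Hbounds : forall t, a <= p t <= b)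
  (Hdpb : exists M, forall t, Rabs (dp t) <= M)
  (Hddpb : exists M, forall t, Rabs (ddp t) <= M)
  (Hlt : tt1 < tt2)
  (Hmax1 : is_lub (fun y => exists t, y = dp t) (dp tt1))
  (Hmax2 : is_lub (fun y => exists t, y = dp t) (dp tt2))
  (Hp : p tt1 > p tt2) :
  exists t0 v0 t0' v0' t1 v1,
    above_vstar dp v0 /\ above_vstar dp v0' /\
    (t0, v0) <> (t0', v0') /\
    pingpong p dp t0 v0 t1 v1 /\ pingpong p dp t0' v0' t1 v1.
Proof.
  set (m := dp tt1).
  assert (Hm2 : dp tt2 = m) by exact (is_lub_u _ _ _ Hmax2 Hmax1).
  assert (Hm : forall t, dp t <= m) by (intro t; apply (proj1 Hmax1); now exists t).
  pose proof (derivative_bound_nonneg p dp a b m Hdp Hbounds Hm) as Hm0.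
  set (v1 := (p tt1 - p tt2) / (tt2 - tt1)).
  assert (Hv1 : 0 < v1) by (apply Rdiv_lt_0_compat; lra).
  set (v0 := v1 + 2 * m).
  assert (Hrefl1 : v0 - 2 * dp tt1 = v1) by (unfold v0, m; ring).
  assert (Hrefl2 : v0 - 2 * dp tt2 = v1) by (rewrite Hm2; unfold v0; ring).
  assert (Hav : above_vstar dp v0)
    by (apply (above_vstar_of_max dp m); [exact Hmax1 | rewrite Rmax_left; lra]).
  assert (Hchord : v1 * (tt2 - tt1) = p tt1 - p tt2) by (unfold v1; field; lra).
  pose proof (pingpong_from_impact p dp m tt1 v0 Hdp Hm ltac:(lra) ltac:(lra)) as H1.
  pose proof (pingpong_from_impact p dp m tt2 v0 Hdp Hm ltac:(lra) ltac:(lra)) as H2.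
  rewrite Hrefl1 in H1; rewrite Hrefl2, <- (chord_return_times p tt1 tt2 v1 ltac:(lra) Hchord) in H2.
  exists (tt1 - p tt1 / v0), v0, (tt2 - p tt2 / v0), v0, (tt1 + p tt1 / v1), v1.
  repeat split; try assumption.
  intro Heq; injection Heq as Heq.
  pose proof (distinct_launch_times p tt1 tt2 v0 Hlt ltac:(lra) ltac:(lra)).
  lra.
Qed.
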